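(* The images of the forkless monomials $\mathfrak{m}\in\mathfrak{M}$ under the projection $\mathcal{X}\to\mathcal{X}/\mathcal{J}$ form a basis of the $\mathbf{k}$-module $\mathcal{X}/\mathcal{J}$.
   Context: Let $\mathbf{k}$ be a commutative ring, let $\beta,\alpha\in\mathbf{k}$, and let $n$ be a positive integer. Let $\mathcal{X}=\mathbf{k}[x_{i,j}\mid 1\le i<j\le n]$ be the polynomial ring over $\mathbf{k}$ in the indeterminates $x_{i,j}$, and $\mathfrak{M}$ the set of monomials in them. Let $\mathcal{J}$ be the ideal of $\mathcal{X}$ generated by all elements $x_{i,j}x_{j,k}-x_{i,k}(x_{i,j}+x_{j,k}+\beta)-\alpha$ for $1\le i<j<k\le n$. A monomial $\mathfrak{m}\in\mathfrak{M}$ is forkless if there is no triple $1\le i<j<k\le n$ with $x_{i,j}x_{i,k}\mid\mathfrak{m}$. *)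

From HB Require Import structures.
From mathcomp Require Import all_boot all_order all_algebra.
Set Implicit Arguments. Unset Strict Implicit. Unset Printing Implicit Defensive.
Import GRing.Theory.
Local Open Scope ring_scope.

(* indeterminates x_{i,j}, 1 <= i < j <= n (0-based here) *)
Definition var (n : nat) := {p : 'I_n * 'I_n | (p.1 < p.2)%N}.

Definition mono (n : nat) := {ffun var n -> nat}.

Definition mmul n (a b : mono n) : mono n := [ffun v => (a v + b v)%N].
Definition mone n : mono n := [ffun _ => 0%N].
(* the monomial x_{i,j} (only used for i < j) *)
Definition mx n (i j : 'I_n) : mono n := [ffun v : var n => nat_of_bool (val v == (i, j))].
Definition mdvd n (a b : mono n) : bool := [forall v, (a v <= b v)%N].

Definition forkless n (m : mono n) : Prop :=
  forall i j k : 'I_n, (i < j)%N -> (j < k)%N -> ~~ mdvd (mmul (mx i j) (mx i k)) m.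

(* polynomials over R: formal finite sums of terms c * m;
   two such represent the same polynomial iff they have the same coefficients *)
Definition xpoly (R : comPzRingType) n := seq (R * mono n).
Definition coef (R : comPzRingType) n (p : xpoly R n) (m : mono n) : R :=
  \sum_(t <- p | t.2 == m) t.1.
Definition padd (R : comPzRingType) n (p q : xpoly R n) : xpoly R n := p ++ q.
Definition popp (R : comPzRingType) n (p : xpoly R n) : xpoly R n :=
  [seq (- t.1, t.2) | t <- p].
Definition pmul (R : comPzRingType) n (p q : xpoly R n) : xpoly R n :=
  [seq (a.1 * b.1, mmul a.2 b.2) | a <- p, b <- q].

Definition gen (R : comPzRingType) n (beta alpha : R) (i j k : 'I_n) : xpoly R n :=
  [:: (1, mmul (mx i j) (mx j k));
      (-1, mmul (mx i k) (mx i j));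
      (-1, mmul (mx i k) (mx j k));
      (- beta, mx i k);
      (- alpha, mone n)].

Definition inJ (R : comPzRingType) n (beta alpha : R) (p : xpoly R n) : Prop :=
  exists s : seq (xpoly R n * ('I_n * 'I_n * 'I_n)),
    all (fun t : xpoly R n * ('I_n * 'I_n * 'I_n) => (t.2.1.1 < t.2.1.2)%N && (t.2.1.2 < t.2.2)%N) s /\
    coef p =1 coef (flatten [seq pmul t.1 (gen beta alpha t.2.1.1 t.2.1.2 t.2.2) | t : xpoly R n * ('I_n * 'I_n * 'I_n) <- s]).

From HB Require Import structures.
From mathcomp Require Import all_boot all_order all_algebra.
From mathcomp Require Import zify ring.
Import GRing.Theory.
Local Open Scope ring_scope.

(* Orient each generator as the rewriting rule
     x_{ik} x_{ij}  ~>  x_{ij} x_{jk} - x_{ik} x_{jk} - beta x_{ik} - alpha   (i < j < k),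
   whose left sides are exactly the forks.  Giving x_{ij} the weight n - i, every rule strictly
   lowers the weight, so reducing at forks terminates and yields a normal form nf(m): a
   combination of forkless monomials congruent to m modulo J.  This gives spanning.
   By the diamond lemma, proved by induction on the weight, the coefficients of nf(m) do not
   depend on which fork is reduced first: two forks dividing m either involve disjoint variables,
   and the two reductions commute, or they overlap inside x_{ia} x_{ib} x_{ic} with a < b < c,
   where an explicit computation resolves the ambiguity.  Hence m |-> nf(m) extends to a linear
   map vanishing on J and fixing forkless monomials, which gives independence. *)

Set Implicit Arguments.
Unset Strict Implicit.
Unset Printing Implicit Defensive.

Section Monomials.
Variable n : nat.
Implicit Types (a b m z : mono n) (i j k : 'I_n).

Definition mdiv a b : mono n := [ffun v => (a v - b v)%N].
Definition var_weight (v : var n) : nat := (n - (val v).1)%N.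
Definition mweight m : nat := (\sum_(v : var n) m v * var_weight v)%N.

Lemma mmulE a b v : mmul a b v = (a v + b v)%N.
Proof. by rewrite ffunE. Qed.

Lemma mdivE a b v : mdiv a b v = (a v - b v)%N.
Proof. by rewrite ffunE. Qed.

Lemma mmulA a b c : mmul a (mmul b c) = mmul (mmul a b) c.
Proof. by apply/ffunP=> v; rewrite !mmulE addnA. Qed.

Lemma mmulC a b : mmul a b = mmul b a.
Proof. by apply/ffunP=> v; rewrite !mmulE addnC. Qed.

Lemma mmulAC z a b : mmul (mmul z a) b = mmul (mmul z b) a.
Proof. by rewrite -!mmulA [mmul a b]mmulC. Qed.

Lemma mmul1 a : mmul a (mone n) = a.
Proof. by apply/ffunP=> v; rewrite mmulE ffunE addn0. Qed.

Lemma mdvdP a b : reflect (forall v, a v <= b v)%N (mdvd a b).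
Proof. exact: forallP. Qed.

Lemma mdivK a b : mdvd a b -> mmul (mdiv b a) a = b.
Proof. by move/mdvdP=> h; apply/ffunP=> v; rewrite mmulE mdivE subnK. Qed.

Lemma mmulK a b : mdiv (mmul b a) a = b.
Proof. by apply/ffunP=> v; rewrite mdivE mmulE addnK. Qed.

Lemma mdvd_mull a b : mdvd a (mmul b a).
Proof. by apply/mdvdP=> v; rewrite mmulE leq_addl. Qed.

Lemma mweightM a b : mweight (mmul a b) = (mweight a + mweight b)%N.
Proof. by rewrite /mweight -big_split; apply: eq_bigr => v _; rewrite mmulE mulnDl. Qed.

Lemma mweight_mx i j : (i < j)%N -> mweight (mx i j) = (n - i)%N.
Proof.
move=> hij; pose v0 : var n := exist _ (i, j) hij.
rewrite /mweight (bigD1 v0) //= big1 ?addn0; first by rewrite ffunE eqxx mul1n.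
move=> v /eqP hv; rewrite ffunE; case: eqP => // e; exfalso; apply: hv.
by apply: val_inj; rewrite e.
Qed.

Lemma pair_neq_ltn i j k : (j < k)%N -> (i, j) <> (i, k).
Proof. by move=> h [e]; move: h; rewrite e ltnn. Qed.

Lemma mx_disj i j i' j' v : (i, j) <> (i', j') -> (mx i j v + mx i' j' v <= 1)%N.
Proof. by move=> ne; rewrite !ffunE; case: eqP => [->|]; case: eqP. Qed.

End Monomials.

Section Coefficients.
Variables (R : comPzRingType) (n : nat).
Implicit Types (p q : xpoly R n) (x : mono n).

Definition pscale (c : R) p : xpoly R n := [seq (c * t.1, t.2) | t <- p].

Lemma xcoef_nil x : coef ([::] : xpoly R n) x = 0.
Proof. by rewrite /coef big_nil. Qed.

Lemma xcoef_cons t p x : coef (t :: p) x = (t.2 == x)%:R * t.1 + coef p x.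
Proof. by rewrite /coef big_cons; case: eqP => _; rewrite ?mul1r ?mul0r ?add0r. Qed.

Lemma xcoefE p x : coef p x = \sum_(t <- p) (t.2 == x)%:R * t.1.
Proof. by elim: p => [|t p IH]; rewrite ?xcoef_nil ?big_nil // xcoef_cons IH big_cons. Qed.

Lemma xcoef_cat p q x : coef (p ++ q) x = coef p x + coef q x.
Proof. by rewrite /coef big_cat. Qed.

Lemma xcoef_scale c p x : coef (pscale c p) x = c * coef p x.
Proof. by rewrite !xcoefE big_map big_distrr; apply: eq_bigr => t _ /=; ring. Qed.

Lemma xcoef_popp p x : coef (popp p) x = - coef p x.
Proof. by rewrite !xcoefE big_map -sumrN; apply: eq_bigr => t _ /=; ring. Qed.

Lemma xcoef_flatten (T : Type) (s : seq T) (G : T -> xpoly R n) x :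
  coef (flatten [seq G t | t <- s]) x = \sum_(t <- s) coef (G t) x.
Proof. by elim: s => [|t s IH]; rewrite ?xcoef_nil ?big_nil //= xcoef_cat IH big_cons. Qed.

Lemma xcoef_pmul_scale c p q x : coef (pmul (pscale c p) q) x = c * coef (pmul p q) x.
Proof.
elim: p => [|t p IH]; first by rewrite /pmul /= xcoef_nil mulr0.
have -> : pscale c (t :: p) = (c * t.1, t.2) :: pscale c p by [].
rewrite /pmul !allpairs_cons -/(pmul (pscale c p) q) -/(pmul p q) !xcoef_cat IH mulrDr.
by congr (_ + _); rewrite !xcoefE !big_map big_distrr; apply: eq_bigr => b _ /=; ring.
Qed.

End Coefficients.

Section Ideal.
Variables (R : comPzRingType) (beta alpha : R) (n : nat).
Implicit Types (p q : xpoly R n).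

Lemma inJ_eq p q : coef p =1 coef q -> inJ beta alpha q -> inJ beta alpha p.
Proof. by move=> e [s [hs h]]; exists s; split => // y; rewrite e h. Qed.

Lemma inJ0 p : coef p =1 (fun=> 0) -> inJ beta alpha p.
Proof. by move=> e; exists [::]; split => // y; rewrite e /= xcoef_nil. Qed.

Lemma inJ_cat p q : inJ beta alpha p -> inJ beta alpha q -> inJ beta alpha (p ++ q).
Proof.
move=> [s1 [h1 e1]] [s2 [h2 e2]]; exists (s1 ++ s2); split; first by rewrite all_cat h1.
by move=> y; rewrite xcoef_cat e1 e2 map_cat flatten_cat xcoef_cat.
Qed.

Lemma inJ_scale c p : inJ beta alpha p -> inJ beta alpha (pscale c p).
Proof.
move=> [s [hs e]]; exists [seq (pscale c t.1, t.2) | t <- s]; split; first by rewrite all_map.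
move=> y; rewrite xcoef_scale e !xcoef_flatten big_map big_distrr /=.
by apply: eq_bigr => t _; rewrite xcoef_pmul_scale.
Qed.

Lemma inJ_flatten (T : eqType) (s : seq T) (G : T -> xpoly R n) :
  (forall t, t \in s -> inJ beta alpha (G t)) -> inJ beta alpha (flatten [seq G t | t <- s]).
Proof.
elim: s => [|t s IH] h; first by apply: inJ0 => y; rewrite xcoef_nil.
apply: inJ_cat; first by apply: h; rewrite inE eqxx.
by apply: IH => t' ht'; apply: h; rewrite inE ht' orbT.
Qed.

End Ideal.

Section Rewriting.
Variables (R : comPzRingType) (beta alpha : R) (n : nat).
Implicit Types (m u x : mono n) (p q : xpoly R n).

Definition fork := ('I_n * 'I_n * 'I_n)%type.
Definition fork_ok (f : fork) : bool := (f.1.1 < f.1.2 < f.2)%N.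
Definition fork_lm (f : fork) : mono n := mmul (mx f.1.1 f.2) (mx f.1.1 f.1.2).
Definition has_fork (f : fork) m : bool := fork_ok f && mdvd (fork_lm f) m.

Definition rhs_ij_jk (f : fork) : mono n := mmul (mx f.1.1 f.1.2) (mx f.1.2 f.2).
Definition rhs_ik_jk (f : fork) : mono n := mmul (mx f.1.1 f.2) (mx f.1.2 f.2).
Definition rhs_ik (f : fork) : mono n := mx f.1.1 f.2.

Definition reduct (f : fork) u : xpoly R n :=
  [:: (1, mmul u (rhs_ij_jk f)); (-1, mmul u (rhs_ik_jk f));
      (- beta, mmul u (rhs_ik f)); (- alpha, u)].

Lemma mweight_rhs f : fork_ok f ->
  [/\ (mweight (rhs_ij_jk f) < mweight (fork_lm f))%N,
      (mweight (rhs_ik_jk f) < mweight (fork_lm f))%N &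
      (mweight (rhs_ik f) < mweight (fork_lm f))%N].
Proof.
case: f => [[i j] k] /andP [/= hij hjk]; have hik : (i < k)%N by lia.
rewrite /rhs_ij_jk /rhs_ik_jk /rhs_ik /fork_lm /= !mweightM !mweight_mx //.
by have := ltn_ord k; have := ltn_ord j; split; lia.
Qed.

Lemma mweight_reduct f m t :
  has_fork f m -> t \in reduct f (mdiv m (fork_lm f)) -> (mweight t.2 < mweight m)%N.
Proof.
case/andP=> hf hd; have [h1 h2 h3] := mweight_rhs hf.
have hm : mweight m = (mweight (mdiv m (fork_lm f)) + mweight (fork_lm f))%N.
  by rewrite -mweightM mdivK.
by rewrite !inE => /or4P [] /eqP -> /=; rewrite ?(mweightM (mdiv _ _)); lia.
Qed.

(* The fuel only serves to make the recursion structural (see nf_fuel_stable). *)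
Fixpoint nf_fuel (fuel : nat) m : xpoly R n :=
  if fuel is fuel'.+1 then
    if [pick f | has_fork f m] is Some f then
      flatten [seq pscale t.1 (nf_fuel fuel' t.2) | t <- reduct f (mdiv m (fork_lm f))]
    else [:: (1, m)]
  else [::].

Lemma nf_fuelS (fuel : nat) m : nf_fuel fuel.+1 m =
  if [pick f | has_fork f m] is Some f then
    flatten [seq pscale t.1 (nf_fuel fuel t.2) | t <- reduct f (mdiv m (fork_lm f))]
  else [:: (1, m)].
Proof. by []. Qed.

Lemma nf_fuel_stable (k1 k2 : nat) m :
  (mweight m < k1)%N -> (mweight m < k2)%N -> nf_fuel k1 m = nf_fuel k2 m.
Proof.
elim: k1 k2 m => [|k1 IH] [|k2] m // h1 h2; rewrite !nf_fuelS.
case: pickP => [f hf|//]; congr flatten; apply/eq_in_map => t ht; congr pscale.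
have hw := mweight_reduct hf ht.
by apply: IH; [exact: leq_trans hw h1 | exact: leq_trans hw h2].
Qed.

Definition nf m := nf_fuel (mweight m).+1 m.

Lemma nfE m : nf m =
  if [pick f | has_fork f m] is Some f then
    flatten [seq pscale t.1 (nf t.2) | t <- reduct f (mdiv m (fork_lm f))]
  else [:: (1, m)].
Proof.
rewrite /nf nf_fuelS; case: pickP => [f hf|//]; congr flatten; apply/eq_in_map => t ht.
by congr pscale; apply: nf_fuel_stable; [exact: mweight_reduct hf ht | exact: ltnSn].
Qed.

Lemma forkless_pick m : forkless m <-> [pick f | has_fork f m] = None.
Proof.
split=> [hf | hp i j k hij hjk].
  case: pickP => // -[[i j] k] /andP [/andP [/= hij hjk] hd].
  by have := hf i j k hij hjk; rewrite /fork_lm /= mmulC in hd; rewrite hd.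
apply/negP => hd; move: hp; case: pickP => // /(_ (i, j, k)).
by rewrite /has_fork /fork_ok /fork_lm /= hij hjk mmulC hd.
Qed.

Lemma nf_forkless m t : t \in nf m -> forkless t.2.
Proof.
move: {2}(mweight m).+1 (ltnSn (mweight m)) => w; elim: w m t => // w IH m t hw.
rewrite nfE; case hp: [pick g | has_fork g m] => [g|]; last first.
  by rewrite inE => /eqP -> /=; apply/forkless_pick.
have hg : has_fork g m by move: hp; case: pickP => // g' hg' [<-].
case/flatten_mapP => t0 ht0 /mapP [t' ht' ->] /=.
by apply: IH ht'; rewrite ltnS in hw; exact: leq_trans (mweight_reduct hg ht0) hw.
Qed.

Definition nf_coef m x : R := coef (nf m) x.

Definition reduct_coef (f : fork) u x : R :=
  nf_coef (mmul u (rhs_ij_jk f)) x - nf_coef (mmul u (rhs_ik_jk f)) x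
  - beta * nf_coef (mmul u (rhs_ik f)) x - alpha * nf_coef u x.

Lemma nf_coef_pick m g x :
  [pick f | has_fork f m] = Some g -> nf_coef m x = reduct_coef g (mdiv m (fork_lm g)) x.
Proof.
move=> hp; rewrite /nf_coef nfE hp xcoef_flatten /= !big_cons big_nil !xcoef_scale.
by rewrite /reduct_coef /nf_coef /=; ring.
Qed.

Lemma nf_coef_forkless m x : forkless m -> nf_coef m x = (m == x)%:R.
Proof. by move/forkless_pick=> hp; rewrite /nf_coef nfE hp xcoef_cons xcoef_nil mulr1 addr0. Qed.

Definition reduct_coef_below (w : nat) := forall u (f : fork) x, fork_ok f ->
  (mweight (mmul u (fork_lm f)) < w)%N -> nf_coef (mmul u (fork_lm f)) x = reduct_coef f u x.

Lemma disjoint_forks_agree m (f g : fork) x :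
  reduct_coef_below (mweight m) -> fork_ok f -> fork_ok g ->
  mdvd (mmul (fork_lm f) (fork_lm g)) m ->
  reduct_coef f (mdiv m (fork_lm f)) x = reduct_coef g (mdiv m (fork_lm g)) x.
Proof.
move=> IH hf hg hd; set z := mdiv m (mmul (fork_lm f) (fork_lm g)).
have hm : m = mmul (mmul z (fork_lm f)) (fork_lm g) by rewrite -mmulA mdivK.
have -> : mdiv m (fork_lm f) = mmul z (fork_lm g) by rewrite hm mmulAC mmulK.
have -> : mdiv m (fork_lm g) = mmul z (fork_lm f) by rewrite hm mmulK.
have wm : mweight m = (mweight z + mweight (fork_lm f) + mweight (fork_lm g))%N.
  by rewrite {1}hm 2!mweightM.
have [f1 f2 f3] := mweight_rhs hf; have [g1 g2 g3] := mweight_rhs hg.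
have red_g t : (mweight t < mweight (fork_lm f))%N ->
    nf_coef (mmul (mmul z (fork_lm g)) t) x = reduct_coef g (mmul z t) x.
  by move=> ht; rewrite mmulAC; apply: IH; rewrite // 2!mweightM; lia.
have red_f t : (mweight t < mweight (fork_lm g))%N ->
    nf_coef (mmul (mmul z (fork_lm f)) t) x = reduct_coef f (mmul z t) x.
  by move=> ht; rewrite mmulAC; apply: IH; rewrite // 2!mweightM; lia.
have red_g0 : nf_coef (mmul z (fork_lm g)) x = reduct_coef g z x.
  by apply: IH; rewrite // mweightM; lia.
have red_f0 : nf_coef (mmul z (fork_lm f)) x = reduct_coef f z x.
  by apply: IH; rewrite // mweightM; lia.
rewrite /reduct_coef !red_g // !red_f // red_g0 red_f0 /reduct_coef.
by rewrite !(mmulAC z (rhs_ij_jk g)) !(mmulAC z (rhs_ik_jk g)) !(mmulAC z (rhs_ik g)); ring.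
Qed.

Section Overlap.
Variables (m x : mono n) (i a b c : 'I_n).
Hypotheses (hia : (i < a)%N) (hab : (a < b)%N) (hbc : (b < c)%N).
Hypothesis IH : reduct_coef_below (mweight m).

Section Resolution.
Hypothesis hd : forall v, (mx i a v + mx i b v + mx i c v <= m v)%N.

Let rest := mdiv m (mmul (mx i a) (mmul (mx i b) (mx i c))).

(* rest * x_{ia}^k1 x_{ib}^k2 x_{ic}^k3 x_{ab}^k4 x_{ac}^k5 x_{bc}^k6: all monomials met while
   resolving the overlap x_{ia} x_{ib} x_{ic}. *)
Definition tri_mon (k1 k2 k3 k4 k5 k6 : nat) : mono n :=
  [ffun v => rest v + k1 * mx i a v + k2 * mx i b v + k3 * mx i c v
             + k4 * mx a b v + k5 * mx a c v + k6 * mx b c v]%N.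

Lemma tri_monE k1 k2 k3 k4 k5 k6 v : tri_mon k1 k2 k3 k4 k5 k6 v =
  (rest v + k1 * mx i a v + k2 * mx i b v + k3 * mx i c v
   + k4 * mx a b v + k5 * mx a c v + k6 * mx b c v)%N.
Proof. by rewrite ffunE. Qed.

Lemma tri_mon_ia k1 k2 k3 k4 k5 k6 :
  mmul (tri_mon k1 k2 k3 k4 k5 k6) (mx i a) = tri_mon k1.+1 k2 k3 k4 k5 k6.
Proof. by apply/ffunP=> v; rewrite mmulE !tri_monE; lia. Qed.
Lemma tri_mon_ib k1 k2 k3 k4 k5 k6 :
  mmul (tri_mon k1 k2 k3 k4 k5 k6) (mx i b) = tri_mon k1 k2.+1 k3 k4 k5 k6.
Proof. by apply/ffunP=> v; rewrite mmulE !tri_monE; lia. Qed.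
Lemma tri_mon_ic k1 k2 k3 k4 k5 k6 :
  mmul (tri_mon k1 k2 k3 k4 k5 k6) (mx i c) = tri_mon k1 k2 k3.+1 k4 k5 k6.
Proof. by apply/ffunP=> v; rewrite mmulE !tri_monE; lia. Qed.
Lemma tri_mon_ab k1 k2 k3 k4 k5 k6 :
  mmul (tri_mon k1 k2 k3 k4 k5 k6) (mx a b) = tri_mon k1 k2 k3 k4.+1 k5 k6.
Proof. by apply/ffunP=> v; rewrite mmulE !tri_monE; lia. Qed.
Lemma tri_mon_ac k1 k2 k3 k4 k5 k6 :
  mmul (tri_mon k1 k2 k3 k4 k5 k6) (mx a c) = tri_mon k1 k2 k3 k4 k5.+1 k6.
Proof. by apply/ffunP=> v; rewrite mmulE !tri_monE; lia. Qed.
Lemma tri_mon_bc k1 k2 k3 k4 k5 k6 :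
  mmul (tri_mon k1 k2 k3 k4 k5 k6) (mx b c) = tri_mon k1 k2 k3 k4 k5 k6.+1.
Proof. by apply/ffunP=> v; rewrite mmulE !tri_monE; lia. Qed.

Let tri_mon_mul := (tri_mon_ia, tri_mon_ib, tri_mon_ic, tri_mon_ab, tri_mon_ac, tri_mon_bc).

Lemma tri_mon_top : m = tri_mon 1 1 1 0 0 0.
Proof.
apply/ffunP=> v; have := hd v; rewrite tri_monE /rest mdivE !mmulE.
by move: (m v) (mx i a v) (mx i b v) (mx i c v) => *; lia.
Qed.

Lemma mweight_tri_mon k1 k2 k3 k4 k5 k6 : mweight (tri_mon k1 k2 k3 k4 k5 k6) =
  (mweight rest + k1 * (n - i) + k2 * (n - i) + k3 * (n - i)
   + k4 * (n - a) + k5 * (n - a) + k6 * (n - b))%N.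
Proof.
have w1 := mweight_mx hia; have w2 := mweight_mx (ltn_trans hia hab).
have w3 := mweight_mx (ltn_trans hia (ltn_trans hab hbc)).
have w4 := mweight_mx hab; have w5 := mweight_mx (ltn_trans hab hbc).
have w6 := mweight_mx hbc.
rewrite /mweight in w1 w2 w3 w4 w5 w6 *.
rewrite (eq_bigr (fun v => rest v * var_weight v + k1 * (mx i a v * var_weight v)
  + k2 * (mx i b v * var_weight v) + k3 * (mx i c v * var_weight v)
  + k4 * (mx a b v * var_weight v) + k5 * (mx a c v * var_weight v)
  + k6 * (mx b c v * var_weight v))%N); last by move=> v _; rewrite tri_monE; ring.
by rewrite !big_split -!big_distrr /= w1 w2 w3 w4 w5 w6.
Qed.

Definition tri_small (k1 k2 k3 k4 k5 k6 : nat) : bool :=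
  (k1 + k2 + k3 <= 2)%N && (k1 + k2 + k3 + k4 + k5 + k6 <= 3)%N.

Lemma mweight_tri_mon_lt k1 k2 k3 k4 k5 k6 :
  tri_small k1 k2 k3 k4 k5 k6 -> (mweight (tri_mon k1 k2 k3 k4 k5 k6) < mweight m)%N.
Proof.
move=> /andP [hI hJ]; rewrite {1}tri_mon_top !mweight_tri_mon.
by have := ltn_ord c; nia.
Qed.

Lemma tri_reduce_iab k1 k2 k3 k4 k5 k6 : tri_small k1.+1 k2.+1 k3 k4 k5 k6 ->
  nf_coef (tri_mon k1.+1 k2.+1 k3 k4 k5 k6) x =
    nf_coef (tri_mon k1.+1 k2 k3 k4.+1 k5 k6) x - nf_coef (tri_mon k1 k2.+1 k3 k4.+1 k5 k6) x
    - beta * nf_coef (tri_mon k1 k2.+1 k3 k4 k5 k6) x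
    - alpha * nf_coef (tri_mon k1 k2 k3 k4 k5 k6) x.
Proof.
move=> /mweight_tri_mon_lt hw.
have e : tri_mon k1.+1 k2.+1 k3 k4 k5 k6 = mmul (tri_mon k1 k2 k3 k4 k5 k6) (fork_lm (i, a, b)).
  by rewrite /fork_lm /= mmulA !tri_mon_mul.
rewrite e IH -?e /fork_ok /= ?hia ?hab //.
by rewrite /reduct_coef /rhs_ij_jk /rhs_ik_jk /rhs_ik /= !mmulA !tri_mon_mul.
Qed.

Lemma tri_reduce_iac k1 k2 k3 k4 k5 k6 : tri_small k1.+1 k2 k3.+1 k4 k5 k6 ->
  nf_coef (tri_mon k1.+1 k2 k3.+1 k4 k5 k6) x =
    nf_coef (tri_mon k1.+1 k2 k3 k4 k5.+1 k6) x - nf_coef (tri_mon k1 k2 k3.+1 k4 k5.+1 k6) x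
    - beta * nf_coef (tri_mon k1 k2 k3.+1 k4 k5 k6) x
    - alpha * nf_coef (tri_mon k1 k2 k3 k4 k5 k6) x.
Proof.
move=> /mweight_tri_mon_lt hw.
have e : tri_mon k1.+1 k2 k3.+1 k4 k5 k6 = mmul (tri_mon k1 k2 k3 k4 k5 k6) (fork_lm (i, a, c)).
  by rewrite /fork_lm /= mmulA !tri_mon_mul.
rewrite e IH -?e /fork_ok /= ?hia ?(ltn_trans hab hbc) //.
by rewrite /reduct_coef /rhs_ij_jk /rhs_ik_jk /rhs_ik /= !mmulA !tri_mon_mul.
Qed.

Lemma tri_reduce_ibc k1 k2 k3 k4 k5 k6 : tri_small k1 k2.+1 k3.+1 k4 k5 k6 ->
  nf_coef (tri_mon k1 k2.+1 k3.+1 k4 k5 k6) x =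
    nf_coef (tri_mon k1 k2.+1 k3 k4 k5 k6.+1) x - nf_coef (tri_mon k1 k2 k3.+1 k4 k5 k6.+1) x
    - beta * nf_coef (tri_mon k1 k2 k3.+1 k4 k5 k6) x
    - alpha * nf_coef (tri_mon k1 k2 k3 k4 k5 k6) x.
Proof.
move=> /mweight_tri_mon_lt hw.
have e : tri_mon k1 k2.+1 k3.+1 k4 k5 k6 = mmul (tri_mon k1 k2 k3 k4 k5 k6) (fork_lm (i, b, c)).
  by rewrite /fork_lm /= mmulA !tri_mon_mul.
rewrite e IH -?e /fork_ok /= ?(ltn_trans hia hab) ?hbc //.
by rewrite /reduct_coef /rhs_ij_jk /rhs_ik_jk /rhs_ik /= !mmulA !tri_mon_mul.
Qed.

Lemma tri_reduce_abc k1 k2 k3 k4 k5 k6 : tri_small k1 k2 k3 k4.+1 k5.+1 k6 ->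
  nf_coef (tri_mon k1 k2 k3 k4.+1 k5.+1 k6) x =
    nf_coef (tri_mon k1 k2 k3 k4.+1 k5 k6.+1) x - nf_coef (tri_mon k1 k2 k3 k4 k5.+1 k6.+1) x
    - beta * nf_coef (tri_mon k1 k2 k3 k4 k5.+1 k6) x
    - alpha * nf_coef (tri_mon k1 k2 k3 k4 k5 k6) x.
Proof.
move=> /mweight_tri_mon_lt hw.
have e : tri_mon k1 k2 k3 k4.+1 k5.+1 k6 = mmul (tri_mon k1 k2 k3 k4 k5 k6) (fork_lm (a, b, c)).
  by rewrite /fork_lm /= mmulA !tri_mon_mul.
rewrite e IH -?e /fork_ok /= ?hab ?hbc //.
by rewrite /reduct_coef /rhs_ij_jk /rhs_ik_jk /rhs_ik /= !mmulA !tri_mon_mul.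
Qed.

Lemma overlap_resolves :
  reduct_coef (i, a, b) (mdiv m (fork_lm (i, a, b))) x =
    reduct_coef (i, a, c) (mdiv m (fork_lm (i, a, c))) x /\
  reduct_coef (i, a, c) (mdiv m (fork_lm (i, a, c))) x =
    reduct_coef (i, b, c) (mdiv m (fork_lm (i, b, c))) x.
Proof.
have -> : mdiv m (fork_lm (i, a, b)) = tri_mon 0 0 1 0 0 0.
  by rewrite {1}tri_mon_top /fork_lm /= -tri_mon_ia -tri_mon_ib -mmulA mmulK.
have -> : mdiv m (fork_lm (i, a, c)) = tri_mon 0 1 0 0 0 0.
  by rewrite {1}tri_mon_top /fork_lm /= -tri_mon_ia -tri_mon_ic -mmulA mmulK.
have -> : mdiv m (fork_lm (i, b, c)) = tri_mon 1 0 0 0 0 0.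
  by rewrite {1}tri_mon_top /fork_lm /= -tri_mon_ib -tri_mon_ic -mmulA mmulK.
rewrite /reduct_coef /rhs_ij_jk /rhs_ik_jk /rhs_ik /= !mmulA !tri_mon_mul.
(* Once every fork among x_{ia}, x_{ib}, x_{ic}, x_{ab}, x_{ac}, x_{bc} is reduced, the three
   sides are the same combination of the same normal forms. *)
rewrite (@tri_reduce_iac 0 0 0 1 0 0 isT) (@tri_reduce_ibc 0 0 0 1 0 0 isT).
rewrite (@tri_reduce_iab 0 0 0 0 1 0 isT) (@tri_reduce_ibc 0 0 0 0 1 0 isT).
rewrite (@tri_reduce_iab 0 0 0 0 0 1 isT) (@tri_reduce_iac 0 0 0 0 0 1 isT).
rewrite (@tri_reduce_ibc 0 0 0 0 0 0 isT) (@tri_reduce_iac 0 0 0 0 0 0 isT).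
rewrite (@tri_reduce_abc 1 0 0 0 0 0 isT) (@tri_reduce_abc 0 0 1 0 0 0 isT).
rewrite (@tri_reduce_abc 0 1 0 0 0 0 isT).
by split; ring.
Qed.

End Resolution.

Lemma triple_agree (f g : fork) :
  f \in [:: (i, a, b); (i, a, c); (i, b, c)] -> g \in [:: (i, a, b); (i, a, c); (i, b, c)] ->
  has_fork f m -> has_fork g m ->
  reduct_coef f (mdiv m (fork_lm f)) x = reduct_coef g (mdiv m (fork_lm g)) x.
Proof.
move=> hf hg /andP [_ /mdvdP df] /andP [_ /mdvdP dg].
have [-> // | neq] := eqVneq f g.
have hd v : (mx i a v + mx i b v + mx i c v <= m v)%N.
  have := mx_disj v (pair_neq_ltn (i:=i) hab); have := mx_disj v (pair_neq_ltn (i:=i) hbc).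
  have := mx_disj v (pair_neq_ltn (i:=i) (ltn_trans hab hbc)).
  move: neq (df v) (dg v); rewrite !inE in hf hg.
  case/or3P: hf => /eqP ->; case/or3P: hg => /eqP ->; rewrite ?eqxx //= !mmulE /= => _;
  by move: (m v) (mx i a v) (mx i b v) (mx i c v) => *; lia.
have [eq_ab_ac eq_ac_bc] := overlap_resolves hd.
move: hf hg; rewrite !inE => /or3P [] /eqP -> /or3P [] /eqP ->; by rewrite ?eq_ab_ac ?eq_ac_bc.
Qed.

End Overlap.

Lemma forks_agree m x (f g : fork) : reduct_coef_below (mweight m) ->
  has_fork f m -> has_fork g m ->
  reduct_coef f (mdiv m (fork_lm f)) x = reduct_coef g (mdiv m (fork_lm g)) x.
Proof.
case: f => [[i j] k]; case: g => [[i' j'] k'] IH hf hg.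
have /andP [okf /mdvdP df] := hf; have /andP [okg /mdvdP dg] := hg.
have /andP [/= hij hjk] := okf; have /andP [/= hij' hjk'] := okg.
case: (eqVneq (i, j) (i', j')) => [[ei ej] | d1]; first subst i' j'.
  case: (ltngtP k k') => [hkk | hkk | /val_inj ek]; last by subst k'.
  - by apply: (triple_agree x hij hjk hkk IH _ _ hf hg); rewrite !inE eqxx ?orbT.
  - by apply: (triple_agree x hij hjk' hkk IH _ _ hf hg); rewrite !inE eqxx ?orbT.
case: (eqVneq (i, j) (i', k')) => [[ei ek] | d2]; first subst i' k'.
  by apply: (triple_agree x hij' hjk' hjk IH _ _ hf hg); rewrite !inE eqxx ?orbT.
case: (eqVneq (i, k) (i', j')) => [[ei ej] | d3]; first subst i' j'.
  by apply: (triple_agree x hij hjk hjk' IH _ _ hf hg); rewrite !inE eqxx ?orbT.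
case: (eqVneq (i, k) (i', k')) => [[ei ek] | d4]; first subst i' k'.
  case: (ltngtP j j') => [hjj | hjj | /val_inj ej]; last by subst j'.
  - by apply: (triple_agree x hij hjj hjk' IH _ _ hf hg); rewrite !inE eqxx ?orbT.
  - by apply: (triple_agree x hij' hjj hjk IH _ _ hf hg); rewrite !inE eqxx ?orbT.
apply: (disjoint_forks_agree _ IH okf okg); apply/mdvdP => v.
rewrite mmulE; move: (df v) (dg v); rewrite /fork_lm /= !mmulE.
have := mx_disj v (pair_neq_ltn (i:=i) hjk); have := mx_disj v (pair_neq_ltn (i:=i') hjk').
have := mx_disj v (elimN eqP d1); have := mx_disj v (elimN eqP d2).
have := mx_disj v (elimN eqP d3); have := mx_disj v (elimN eqP d4).
by move: (m v) (mx i j v) (mx i k v) (mx i' j' v) (mx i' k' v) => *; lia.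
Qed.

Lemma reduct_coef_below_all w : reduct_coef_below w.
Proof.
elim: w => [|w IHw] u f x hf hw //.
have hif : has_fork f (mmul u (fork_lm f)) by rewrite /has_fork hf mdvd_mull.
case hp: [pick g | has_fork g (mmul u (fork_lm f))] => [g|]; last first.
  by move: hp; case: pickP => // /(_ f); rewrite hif.
have hg : has_fork g (mmul u (fork_lm f)) by move: hp; case: pickP => // g' hg' [<-].
rewrite (nf_coef_pick _ hp) -{2}(mmulK (fork_lm f) u); apply: forks_agree => //.
by move=> u' f' x' hf' hw'; apply: IHw => //; exact: leq_trans hw' hw.
Qed.

Lemma nf_coef_reduct u (f : fork) x :
  fork_ok f -> nf_coef (mmul u (fork_lm f)) x = reduct_coef f u x.
Proof. by move=> hf; apply: (reduct_coef_below_all _ hf (ltnSn _)). Qed.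

Definition nfp_coef (p : xpoly R n) x : R := \sum_(t <- p) t.1 * nf_coef t.2 x.

Lemma nfp_coef_cat p q x : nfp_coef (p ++ q) x = nfp_coef p x + nfp_coef q x.
Proof. by rewrite /nfp_coef big_cat. Qed.

Lemma nfp_coef_flatten (T : Type) (s : seq T) (G : T -> xpoly R n) x :
  nfp_coef (flatten [seq G t | t <- s]) x = \sum_(t <- s) nfp_coef (G t) x.
Proof.
by elim: s => [|t s IH]; rewrite /nfp_coef ?big_nil //= -/(nfp_coef _ x) nfp_coef_cat IH big_cons.
Qed.

Lemma nfp_coef_by_coef p x (s : seq (mono n)) : uniq s -> {subset [seq t.2 | t <- p] <= s} ->
  nfp_coef p x = \sum_(m <- s) coef p m * nf_coef m x.
Proof.
move=> us; elim: p => [|t p IH] hsub.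
  by rewrite /nfp_coef big_nil big1 // => m _; rewrite xcoef_nil mul0r.
have ht : t.2 \in s by apply: hsub; rewrite inE eqxx.
rewrite /nfp_coef big_cons -/(nfp_coef p x) IH; last first.
  by move=> y hy; apply: hsub; rewrite inE hy orbT.
under [RHS]eq_bigr => m _ do rewrite xcoef_cons mulrDl.
rewrite big_split /=; congr (_ + _).
rewrite (bigD1_seq t.2) //= eqxx mul1r big1 ?addr0 // => m hm.
by rewrite eq_sym (negbTE hm) mul0r mul0r.
Qed.

Lemma nfp_coef_eq p q x : coef p =1 coef q -> nfp_coef p x = nfp_coef q x.
Proof.
move=> e; set s := undup [seq t.2 | t <- p ++ q].
have us : uniq s by apply: undup_uniq.
rewrite (nfp_coef_by_coef x us) ?(nfp_coef_by_coef x us).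
- by apply: eq_bigr => m _; rewrite e.
- by move=> y hy; rewrite mem_undup map_cat mem_cat hy orbT.
- by move=> y hy; rewrite mem_undup map_cat mem_cat hy.
Qed.

Lemma nfp_coef_forkless p x : (forall t, t \in p -> forkless t.2) -> nfp_coef p x = coef p x.
Proof.
rewrite /nfp_coef xcoefE => h; apply: eq_big_seq => t /h ht.
by rewrite nf_coef_forkless // mulrC.
Qed.

Lemma nfp_coef_gen (q : xpoly R n) (i j k : 'I_n) x : (i < j < k)%N ->
  nfp_coef (pmul q (gen beta alpha i j k)) x = 0.
Proof.
move=> hf; elim: q => [|t q IH]; first by rewrite /nfp_coef big_nil.
rewrite /pmul allpairs_cons -/(pmul q _) nfp_coef_cat IH addr0 /nfp_coef /= !big_cons big_nil.
have := nf_coef_reduct t.2 x (hf : fork_ok (i, j, k)).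
rewrite /reduct_coef /fork_lm /rhs_ij_jk /rhs_ik_jk /rhs_ik /= mmul1 => ->.
by ring.
Qed.

Lemma forkless_independent c : (forall t, t \in c -> forkless t.2) -> inJ beta alpha c ->
  forall m, coef c m = 0.
Proof.
move=> hc [s [hs e]] m.
rewrite -(nfp_coef_forkless m hc) (nfp_coef_eq m e) nfp_coef_flatten big1_seq // => -[q f] /= hq.
exact/nfp_coef_gen/(allP hs _ hq).
Qed.

Lemma inJ_reduct u (f : fork) :
  fork_ok f -> inJ beta alpha ([:: (1, mmul u (fork_lm f))] ++ popp (reduct f u)).
Proof.
case: f => [[i j] k] hf; exists [:: ([:: (-1, u)], (i, j, k))]; split; first by rewrite /= andbT.
move=> y; rewrite /= /reduct /popp /fork_lm /rhs_ij_jk /rhs_ik_jk /rhs_ik /= mmul1.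
by rewrite !xcoef_cons xcoef_nil /=; ring.
Qed.

Lemma inJ_sub_nf m : inJ beta alpha ([:: (1, m)] ++ popp (nf m)).
Proof.
move: {2}(mweight m).+1 (ltnSn (mweight m)) => w; elim: w m => // w IH m hw.
rewrite nfE; case hp: [pick g | has_fork g m] => [g|]; last first.
  by apply: inJ0 => y; rewrite /popp /= !xcoef_cons xcoef_nil /=; ring.
have hg : has_fork g m by move: hp; case: pickP => // g' hg' [<-].
have hm : m = mmul (mdiv m (fork_lm g)) (fork_lm g) by rewrite mdivK //; case/andP: hg.
set u := mdiv m (fork_lm g) in hm *.
apply: (inJ_eq (q := ([:: (1, mmul u (fork_lm g))] ++ popp (reduct g u)) ++
   flatten [seq pscale t.1 ([:: (1, t.2)] ++ popp (nf t.2)) | t <- reduct g u])).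
  move=> y; rewrite -hm !xcoef_cat !xcoef_popp !xcoef_flatten /reduct !big_cons big_nil /=.
  by rewrite !(xcoef_cons, xcoef_scale, xcoef_popp, xcoef_nil) /=; ring.
apply: inJ_cat; first by apply: inJ_reduct; case/andP: hg.
apply: inJ_flatten => t ht; apply/inJ_scale/IH.
by rewrite ltnS in hw; exact: leq_trans (mweight_reduct hg ht) hw.
Qed.

Lemma forkless_span p : exists c : xpoly R n,
  (forall t, t \in c -> forkless t.2) /\ inJ beta alpha (padd p (popp c)).
Proof.
exists (flatten [seq pscale t.1 (nf t.2) | t <- p]); split.
  by move=> t /flatten_mapP [t0 _ /mapP [t' ht' ->]]; apply: nf_forkless ht'.
apply: (inJ_eq (q := flatten [seq pscale t.1 ([:: (1, t.2)] ++ popp (nf t.2)) | t <- p])).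
  move=> y; rewrite /padd xcoef_cat xcoef_popp !xcoef_flatten xcoefE -sumrN -big_split /=.
  apply: eq_bigr => t _.
  by rewrite !(xcoef_cons, xcoef_scale, xcoef_popp, xcoef_nil, xcoef_cat) /=; ring.
by apply: inJ_flatten => t _; apply/inJ_scale/inJ_sub_nf.
Qed.

End Rewriting.

Theorem proposition4p4 (R : comPzRingType) (beta alpha : R) (n : nat) (hn : (0 < n)%N) :
  (forall p : xpoly R n, exists c : xpoly R n,
      (forall t, t \in c -> forkless t.2) /\ inJ beta alpha (padd p (popp c)))
  /\
  (forall c : xpoly R n,
      (forall t, t \in c -> forkless t.2) -> inJ beta alpha c ->
      forall m : mono n, coef c m = 0).
Proof.
(* [hn] is unused: the statement also holds for n = 0. *)
by split; [exact: forkless_span | exact: forkless_independent].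
Qed.
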